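(* For every open continuous surjection $f:X\to Y$ between compact Hausdorff spaces, the map $OS(f):OS(X)\to OS(Y)$ is open.
   Context: All spaces are compact Hausdorff and all maps continuous. For a compactum $X$, $C(X)$ is the Banach space of continuous real functions on $X$ with the sup-norm, $c_X$ the constant function with value $c$. Let $V(X)=\prod_{\varphi\in C(X)}[\min\varphi,\max\varphi]$ with the product topology. A functional $\nu:C(X)\to\mathbb{R}$ is: normed if $\nu(1_X)=1$; weakly additive if $\nu(\varphi+c_X)=\nu(\varphi)+c$; order-preserving if $\varphi\le\psi$ implies $\nu(\varphi)\le\nu(\psi)$; positively homogeneous if $\nu(t\varphi)=t\nu(\varphi)$ for $t\ge0$; semiadditive if $\nu(\varphi+\psi)\le\nu(\varphi)+\nu(\psi)$. $OS(X)\subset V(X)$ is the subspace of functionals satisfying all five properties. For $f:X\to Y$, $OS(f)(\nu)(\varphi)=\nu(\varphi\circ f)$ for $\varphi\in C(Y)$. *)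

From Stdlib Require Import Reals Lra List Classical FunctionalExtensionality.
Open Scope R_scope.

Record Top := {
  carrier :> Type;
  is_open : (carrier -> Prop) -> Prop;
  open_full : is_open (fun _ => True);
  open_inter : forall U V, is_open U -> is_open V -> is_open (fun x => U x /\ V x);
  open_union : forall F : (carrier -> Prop) -> Prop,
      (forall U, F U -> is_open U) -> is_open (fun x => exists U, F U /\ U x)
}.

Definition top_compact (X : Top) : Prop :=
  forall F : (X -> Prop) -> Prop,
    (forall U, F U -> is_open X U) ->
    (forall x, exists U, F U /\ U x) ->
    exists l : list (X -> Prop),
      (forall U, In U l -> F U) /\ (forall x, exists U, In U l /\ U x).

Definition top_hausdorff (X : Top) : Prop :=
  forall x y : X, x <> y ->
    exists U V, is_open X U /\ is_open X V /\ U x /\ V y /\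
      (forall z, ~ (U z /\ V z)).

Definition top_continuous {X Y : Top} (f : X -> Y) : Prop :=
  forall V, is_open Y V -> is_open X (fun x => V (f x)).

Definition open_map {X Y : Top} (f : X -> Y) : Prop :=
  forall U, is_open X U -> is_open Y (fun y => exists x, U x /\ f x = y).

Definition top_surjective {X Y : Type} (f : X -> Y) : Prop := forall y, exists x, f x = y.

Definition R_open (U : R -> Prop) : Prop :=
  forall x, U x -> exists eps, 0 < eps /\ forall y, Rabs (y - x) < eps -> U y.

Definition cont_real {X : Top} (phi : X -> R) : Prop :=
  forall V, R_open V -> is_open X (fun x => V (phi x)).

Definition C (X : Top) : Type := { phi : X -> R | cont_real phi }.
Definition Cfun {X : Top} (phi : C X) : X -> R := proj1_sig phi.
Coercion Cfun : C >-> Funclass.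

(* Functionals on C(X); V(X) membership: inf phi <= nu phi <= sup phi
   (on compact X these are min and max). *)
Definition in_V {X : Top} (nu : C X -> R) : Prop :=
  forall phi : C X,
    (forall t, (forall x, t <= phi x) -> t <= nu phi) /\
    (forall t, (forall x, phi x <= t) -> nu phi <= t).

Definition normed {X : Top} (nu : C X -> R) : Prop :=
  forall one : C X, (forall x, one x = 1) -> nu one = 1.

Definition weakly_additive {X : Top} (nu : C X -> R) : Prop :=
  forall (phi psi : C X) (c : R), (forall x, psi x = phi x + c) -> nu psi = nu phi + c.

Definition order_preserving {X : Top} (nu : C X -> R) : Prop :=
  forall phi psi : C X, (forall x, phi x <= psi x) -> nu phi <= nu psi.

Definition pos_homogeneous {X : Top} (nu : C X -> R) : Prop :=
  forall (phi psi : C X) (t : R), 0 <= t -> (forall x, psi x = t * phi x) ->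
    nu psi = t * nu phi.

Definition semiadditive {X : Top} (nu : C X -> R) : Prop :=
  forall phi psi chi : C X, (forall x, chi x = phi x + psi x) ->
    nu chi <= nu phi + nu psi.

Definition in_OS {X : Top} (nu : C X -> R) : Prop :=
  in_V nu /\ normed nu /\ weakly_additive nu /\ order_preserving nu /\
  pos_homogeneous nu /\ semiadditive nu.

(* Open subsets of OS(X) for the subspace topology of the product topology
   on V(X) (equivalently of R^{C(X)}): every point of W in OS(X) has a basic
   product neighbourhood (finitely many coordinates) whose trace on OS(X)
   lies in W. *)
Definition OS_open (X : Top) (W : (C X -> R) -> Prop) : Prop :=
  forall nu, in_OS nu -> W nu ->
    exists l : list (C X * R),
      (forall p, In p l -> 0 < snd p) /\
      forall mu, in_OS mu ->
        (forall p, In p l -> Rabs (mu (fst p) - nu (fst p)) < snd p) -> W mu.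

Lemma cont_real_comp {X Y : Top} (f : X -> Y) (hf : top_continuous f) (phi : C Y) :
  cont_real (fun x => phi (f x)).
Proof.
  intros V HV. destruct phi as [phi hphi]; simpl.
  exact (hf _ (hphi V HV)).
Qed.

Definition Ccomp {X Y : Top} (f : X -> Y) (hf : top_continuous f) (phi : C Y) : C X :=
  exist _ (fun x => phi (f x)) (cont_real_comp f hf phi).

Definition OSmap {X Y : Top} (f : X -> Y) (hf : top_continuous f) (nu : C X -> R) : C Y -> R :=
  fun phi => nu (Ccomp f hf phi).

Definition OS_open_map {X Y : Top} (f : X -> Y) (hf : top_continuous f) : Prop :=
  forall W, OS_open X W ->
    OS_open Y (fun mu => exists nu, in_OS nu /\ W nu /\ mu = OSmap f hf nu).

(* Given nu in OS(X) and test functions Phi_0, ..., Phi_(n-1) on X, a functional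
   mu in OS(Y) close enough to OS(f)(nu) is lifted to the sublinear functional
     nu'(phi) = inf { mu(psi) + sum_i c_i (nu(Phi_i) + eps) :
                      c >= 0, phi <= psi o f + sum_i c_i Phi_i }.
   Provided mu respects these prices on functions of the form psi o f, nu' lies
   in OS(X), satisfies OS(f)(nu') = mu, and nu'(Phi_i) <= nu(Phi_i) + eps.
   Because f is both open and closed, fibrewise infima and suprema of continuous
   functions on X are continuous on Y.  The price condition and the lower bounds
   nu'(Phi_k) >= nu(Phi_k) - eps then follow by comparing mu with OS(f)(nu) on
   fibrewise extrema of the combinations t Phi_k - sum_i u_i Phi_i with
   t, u_i in [0, 1]; these depend uniformly continuously on (t, u), so finitely
   many grid values suffice. *)

From Pilot Require Import Defs.
From Stdlib Require Import Reals Lra Lia List Classical ClassicalEpsilon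
  FunctionalExtensionality PropExtensionality.
(* Re-import so that [C] denotes C(X), not the binomial coefficient of Reals. *)
Import Pilot.Defs.
Open Scope R_scope.

Lemma open_ext (X : Top) (U V : X -> Prop) :
  is_open X U -> (forall x, U x <-> V x) -> is_open X V.
Proof.
  intros HU E. replace V with U; auto.
  extensionality x. apply propositional_extensionality, E.
Qed.

Lemma open_of_nbhd (X : Top) (U : X -> Prop) :
  (forall x, U x -> exists V, is_open X V /\ V x /\ forall z, V z -> U z) ->
  is_open X U.
Proof.
  intros H.
  apply open_ext with (fun x => exists V, (is_open X V /\ forall z, V z -> U z) /\ V x).
  - apply open_union. now intros V [HV _].
  - intros x; split.
    + intros [V [[_ HVU] HVx]]. auto.
    + intros Hx. destruct (H x Hx) as [V [HV [HVx HVU]]]. eauto.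
Qed.

Lemma ball_R_open a e : R_open (fun y => Rabs (y - a) < e).
Proof.
  intros x Hx. exists (e - Rabs (x - a)). split; [lra|]. intros y Hy.
  replace (y - a) with ((y - x) + (x - a)) by ring.
  pose proof (Rabs_triang (y - x) (x - a)). lra.
Qed.

Lemma R_open_gt a : R_open (fun v => a < v).
Proof.
  intros x Hx. exists (x - a). split; [lra|]. intros y Hy.
  rewrite Rabs_minus_sym in Hy. pose proof (Rle_abs (x - y)). lra.
Qed.

Lemma R_open_lt b : R_open (fun v => v < b).
Proof.
  intros x Hx. exists (b - x). split; [lra|]. intros y Hy.
  pose proof (Rle_abs (y - x)). lra.
Qed.

Lemma Rabs_le_between a b : Rabs a <= b -> - b <= a <= b.
Proof.
  intros H. pose proof (Rle_abs a). pose proof (Rle_abs (- a)).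
  rewrite Rabs_Ropp in *. lra.
Qed.

Definition eps_continuous (X : Top) (h : X -> R) : Prop :=
  forall x e, 0 < e ->
    exists U, is_open X U /\ U x /\ forall z, U z -> Rabs (h z - h x) < e.

Lemma cont_real_eps_continuous (X : Top) (h : X -> R) :
  cont_real h -> eps_continuous X h.
Proof.
  intros H x e He. exists (fun z => Rabs (h z - h x) < e). repeat split.
  - exact (H _ (ball_R_open (h x) e)).
  - rewrite Rminus_diag, Rabs_R0. lra.
  - auto.
Qed.

Lemma eps_continuous_cont_real (X : Top) (h : X -> R) :
  eps_continuous X h -> cont_real h.
Proof.
  intros H V HV. apply open_of_nbhd. intros x Hx.
  destruct (HV _ Hx) as [e [He Hball]].
  destruct (H x e He) as [U [HU [HUx HUz]]].
  exists U. repeat split; auto.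
Qed.

Lemma eps_continuous_const (X : Top) a : eps_continuous X (fun _ => a).
Proof.
  intros x e He. exists (fun _ => True). repeat split.
  - apply open_full.
  - intros. rewrite Rminus_diag, Rabs_R0. lra.
Qed.

Lemma eps_continuous_add (X : Top) g h :
  eps_continuous X g -> eps_continuous X h -> eps_continuous X (fun x => g x + h x).
Proof.
  intros Hg Hh x e He.
  destruct (Hg x (e / 2)) as [U [HU [HUx HUz]]]; [lra|].
  destruct (Hh x (e / 2)) as [V [HV [HVx HVz]]]; [lra|].
  exists (fun z => U z /\ V z). repeat split; auto using open_inter.
  intros z [HzU HzV]. specialize (HUz z HzU). specialize (HVz z HzV).
  replace (g z + h z - (g x + h x)) with ((g z - g x) + (h z - h x)) by ring.
  pose proof (Rabs_triang (g z - g x) (h z - h x)). lra.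
Qed.

Lemma eps_continuous_scale (X : Top) t g :
  eps_continuous X g -> eps_continuous X (fun x => t * g x).
Proof.
  intros Hg x e He. pose proof (Rabs_pos t).
  destruct (Hg x (e / (Rabs t + 1))) as [U [HU [HUx HUz]]].
  { apply Rdiv_lt_0_compat; lra. }
  exists U. repeat split; auto. intros z Hz. specialize (HUz z Hz).
  replace (t * g z - t * g x) with (t * (g z - g x)) by ring. rewrite Rabs_mult.
  apply Rmult_lt_compat_r with (r := Rabs t + 1) in HUz; [|lra].
  replace (e / (Rabs t + 1) * (Rabs t + 1)) with e in HUz by (field; lra).
  pose proof (Rabs_pos (g z - g x)). nra.
Qed.

Definition cconst (X : Top) (a : R) : C X :=
  exist _ (fun _ => a) (eps_continuous_cont_real _ _ (eps_continuous_const X a)).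

Definition cadd {X : Top} (g h : C X) : C X :=
  exist _ (fun x => g x + h x)
    (eps_continuous_cont_real _ _ (eps_continuous_add X _ _
      (cont_real_eps_continuous _ _ (proj2_sig g))
      (cont_real_eps_continuous _ _ (proj2_sig h)))).

Definition cscale {X : Top} (t : R) (g : C X) : C X :=
  exist _ (fun x => t * g x)
    (eps_continuous_cont_real _ _ (eps_continuous_scale X t _
      (cont_real_eps_continuous _ _ (proj2_sig g)))).

Lemma cconst_eq (X : Top) a x : cconst X a x = a. Proof. reflexivity. Qed.
Lemma cadd_eq (X : Top) (g h : C X) x : cadd g h x = g x + h x. Proof. reflexivity. Qed.
Lemma cscale_eq (X : Top) t (g : C X) x : cscale t g x = t * g x. Proof. reflexivity. Qed.

Lemma cont_real_bounded (X : Top) (g : X -> R) :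
  top_compact X -> cont_real g -> exists B, forall x, Rabs (g x) <= B.
Proof.
  intros hX Hg.
  set (cover := fun U : X -> Prop => exists x0, U = (fun x => Rabs (g x - g x0) < 1)).
  destruct (hX cover) as [l [Hl Hcov]].
  - intros U [x0 ->]. exact (Hg _ (ball_R_open (g x0) 1)).
  - intros x. exists (fun z => Rabs (g z - g x) < 1). split; [now exists x|].
    rewrite Rminus_diag, Rabs_R0. lra.
  - assert (Hfin : exists B, forall U, In U l -> forall x, U x -> Rabs (g x) <= B).
    { clear Hcov. induction l as [|U0 l IH].
      - exists 0. simpl. tauto.
      - destruct IH as [B HB]; [intros; apply Hl; simpl; auto|].
        destruct (Hl U0 (or_introl eq_refl)) as [x0 ->].
        exists (Rmax B (Rabs (g x0) + 1)). intros U [<-|HU] x Hx.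
        + pose proof (Rabs_triang (g x - g x0) (g x0)).
          replace (g x - g x0 + g x0) with (g x) in H by ring.
          pose proof (Rmax_r B (Rabs (g x0) + 1)). lra.
        + pose proof (HB U HU x Hx). pose proof (Rmax_l B (Rabs (g x0) + 1)). lra. }
    destruct Hfin as [B HB]. exists B. intros x.
    destruct (Hcov x) as [U [HU HUx]]. eauto.
Qed.

Lemma C_bounded (X : Top) (g : C X) :
  top_compact X -> exists B, forall x, Rabs (g x) <= B.
Proof. intros hX. exact (cont_real_bounded X g hX (proj2_sig g)). Qed.

Definition lub (E : R -> Prop) : R := epsilon (inhabits 0) (is_lub E).

Lemma lub_spec (E : R -> Prop) : bound E -> (exists x, E x) -> is_lub E (lub E).
Proof.
  intros Hb Hne. unfold lub. apply epsilon_spec.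
  destruct (completeness E Hb Hne) as [m Hm]. eauto.
Qed.

Definition glb (E : R -> Prop) : R := - lub (fun v => E (- v)).

Lemma glb_le (E : R -> Prop) v :
  (exists b, forall w, E w -> b <= w) -> E v -> glb E <= v.
Proof.
  intros [b Hb] Hv. unfold glb.
  destruct (lub_spec (fun v => E (- v))) as [Hub _].
  - exists (- b). intros w Hw. specialize (Hb _ Hw). lra.
  - exists (- v). now rewrite Ropp_involutive.
  - assert (- v <= lub (fun v => E (- v))); [|lra].
    apply Hub. now rewrite Ropp_involutive.
Qed.

Lemma glb_ge (E : R -> Prop) a :
  (exists v, E v) -> (forall v, E v -> a <= v) -> a <= glb E.
Proof.
  intros [v Hv] Hb. unfold glb.
  destruct (lub_spec (fun v => E (- v))) as [_ Hleast].
  - exists (- a). intros w Hw. specialize (Hb _ Hw). lra.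
  - exists (- v). now rewrite Ropp_involutive.
  - assert (lub (fun v => E (- v)) <= - a); [|lra].
    apply Hleast. intros w Hw. specialize (Hb _ Hw). lra.
Qed.

Section FibreExtrema.

Variables (X Y : Top) (f : X -> Y).
Hypotheses (hX : top_compact X) (hYH : top_hausdorff Y) (hf : top_continuous f)
  (hopen : open_map f) (hsurj : top_surjective f).

Lemma fibre_tube (O : X -> Prop) (y0 : Y) :
  is_open X O -> (forall x, f x = y0 -> O x) ->
  exists W, is_open Y W /\ W y0 /\ forall x, W (f x) -> O x.
Proof.
  intros HO Hfib.
  set (avoids U := exists V, is_open Y V /\ V y0 /\ forall x, U x -> ~ V (f x)).
  destruct (hX (fun U => is_open X U /\ ((forall x, U x -> O x) \/ avoids U)))
    as [L [HL Hcov]].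
  - now intros U [HU _].
  - intros x. destruct (classic (f x = y0)) as [E|E].
    + exists O. auto.
    + destruct (hYH (f x) y0 E) as [U [V [HU [HV [HUx [HVy Hdis]]]]]].
      exists (fun z => U (f z)). repeat split; auto.
      right. exists V. repeat split; auto. intros z Hz HVz. apply (Hdis (f z)). auto.
  - assert (HW : exists W, is_open Y W /\ W y0 /\ forall U, In U L ->
        (forall x, U x -> O x) \/ (forall x, U x -> ~ W (f x))).
    { clear Hcov. induction L as [|U0 L IH].
      - exists (fun _ => True). repeat split; [apply open_full | simpl; tauto].
      - destruct IH as [W [HW [HWy HWL]]]; [intros; apply HL; simpl; auto|].
        destruct (HL U0 (or_introl eq_refl)) as [_ [HO0|[V [HV [HVy HU0V]]]]].
        + exists W. repeat split; auto. intros U [<-|HU]; auto.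
        + exists (fun y => W y /\ V y). repeat split; auto using open_inter.
          intros U [<-|HU].
          * right. intros x Hx [_ Hv]. exact (HU0V x Hx Hv).
          * destruct (HWL U HU) as [H|H]; auto.
            right. intros x Hx [Hw _]. exact (H x Hx Hw). }
    destruct HW as [W [HW [HWy HWL]]]. exists W. repeat split; auto.
    intros x Hx. destruct (Hcov x) as [U [HU HUx]].
    destruct (HWL U HU) as [H|H]; auto. exfalso. exact (H x HUx Hx).
Qed.

Definition fibre_sup (g : X -> R) (y : Y) : R := lub (fun v => exists x, f x = y /\ v = g x).

Lemma fibre_sup_is_lub (g : C X) y :
  is_lub (fun v => exists x, f x = y /\ v = g x) (fibre_sup g y).
Proof.
  destruct (C_bounded X g hX) as [B HB]. apply lub_spec.
  - exists B. intros v [x [_ ->]]. pose proof (HB x). pose proof (Rle_abs (g x)). lra.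
  - destruct (hsurj y) as [x Hx]. eauto.
Qed.

Lemma fibre_sup_ge (g : C X) x : g x <= fibre_sup g (f x).
Proof. apply (fibre_sup_is_lub g (f x)). eauto. Qed.

Lemma fibre_sup_le (g : C X) y a : (forall x, f x = y -> g x <= a) -> fibre_sup g y <= a.
Proof.
  intros H. apply (fibre_sup_is_lub g y). intros v [x [Hx ->]]. auto.
Qed.

Lemma fibre_sup_approx (g : C X) y e :
  0 < e -> exists x, f x = y /\ fibre_sup g y - e < g x.
Proof.
  intros He. apply NNPP. intros Hno.
  assert (fibre_sup g y <= fibre_sup g y - e); [|lra].
  apply fibre_sup_le. intros x Hx. apply Rnot_lt_le. intros Hlt. eauto.
Qed.

(* Upper semicontinuity of [fibre_sup g] comes from [f] being closed
   ([fibre_tube]), lower semicontinuity from [f] being open. *)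
Lemma fibre_sup_eps_continuous (g : C X) : eps_continuous Y (fibre_sup g).
Proof.
  intros y0 e He. set (a := fibre_sup g y0).
  pose proof (proj2_sig g) as Hg. simpl in Hg. fold (Cfun g) in Hg.
  destruct (fibre_tube (fun x => g x < a + e / 2) y0) as [W [HW [HWy HWx]]].
  - exact (Hg _ (R_open_lt (a + e / 2))).
  - intros x Hx. pose proof (fibre_sup_ge g x). rewrite Hx in H. fold a in H. lra.
  - destruct (fibre_sup_approx g y0 e He) as [x0 [Hx0 Hgx0]]. fold a in Hgx0.
    set (U := fun y => exists x, a - e < g x /\ f x = y).
    assert (HU : is_open Y U) by exact (hopen _ (Hg _ (R_open_gt (a - e)))).
    exists (fun y => U y /\ W y). repeat split; auto using open_inter.
    + exists x0. auto.
    + intros z [[x [Hx1 Hx2]] Hz]. apply Rabs_def1.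
      * assert (fibre_sup g z <= a + e / 2); [|lra]. apply fibre_sup_le.
        intros x' Hx'. apply Rlt_le, HWx. now rewrite Hx'.
      * pose proof (fibre_sup_ge g x). rewrite Hx2 in H. lra.
Qed.

Definition fibre_supC (g : C X) : C Y :=
  exist _ (fibre_sup g) (eps_continuous_cont_real _ _ (fibre_sup_eps_continuous g)).

Lemma fibre_supC_ge (g : C X) x : g x <= fibre_supC g (f x).
Proof. exact (fibre_sup_ge g x). Qed.

Lemma fibre_supC_le (g : C X) y a : (forall x, f x = y -> g x <= a) -> fibre_supC g y <= a.
Proof. exact (fibre_sup_le g y a). Qed.

Definition fibre_infC (g : C X) : C Y := cscale (-1) (fibre_supC (cscale (-1) g)).

Lemma fibre_infC_le (g : C X) x : fibre_infC g (f x) <= g x.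
Proof.
  unfold fibre_infC. rewrite cscale_eq.
  pose proof (fibre_supC_ge (cscale (-1) g) x) as H. rewrite cscale_eq in H. lra.
Qed.

Lemma fibre_infC_ge (g : C X) y a : (forall x, f x = y -> a <= g x) -> a <= fibre_infC g y.
Proof.
  intros H. unfold fibre_infC. rewrite cscale_eq.
  assert (fibre_supC (cscale (-1) g) y <= - a); [|lra].
  apply fibre_supC_le. intros x Hx. rewrite cscale_eq. specialize (H x Hx). lra.
Qed.

Lemma fibre_supC_dist (g h : C X) eta :
  (forall x, Rabs (g x - h x) <= eta) ->
  forall y, Rabs (fibre_supC g y - fibre_supC h y) <= eta.
Proof.
  intros H y. apply Rabs_le. split.
  - assert (fibre_supC h y <= fibre_supC g y + eta); [|lra]. apply fibre_supC_le.
    intros x <-. pose proof (fibre_supC_ge g x). pose proof (Rabs_le_between _ _ (H x)). lra.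
  - assert (fibre_supC g y <= fibre_supC h y + eta); [|lra]. apply fibre_supC_le.
    intros x <-. pose proof (fibre_supC_ge h x). pose proof (Rabs_le_between _ _ (H x)). lra.
Qed.

Lemma fibre_infC_dist (g h : C X) eta :
  (forall x, Rabs (g x - h x) <= eta) ->
  forall y, Rabs (fibre_infC g y - fibre_infC h y) <= eta.
Proof.
  intros H y. unfold fibre_infC. rewrite !cscale_eq.
  replace (-1 * fibre_supC (cscale (-1) g) y - -1 * fibre_supC (cscale (-1) h) y)
    with (- (fibre_supC (cscale (-1) g) y - fibre_supC (cscale (-1) h) y)) by ring.
  rewrite Rabs_Ropp. apply fibre_supC_dist. intros x. rewrite !cscale_eq.
  replace (-1 * g x - -1 * h x) with (- (g x - h x)) by ring. now rewrite Rabs_Ropp.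
Qed.

End FibreExtrema.

Section OSFunctionals.

Variables (X : Top) (nu : C X -> R).
Hypothesis Hnu : in_OS nu.

Lemma OS_mono (a b : C X) : (forall x, a x <= b x) -> nu a <= nu b.
Proof. destruct Hnu as [_ [_ [_ [Hmono _]]]]. auto. Qed.

Lemma OS_shift (a b : C X) c : (forall x, b x = a x + c) -> nu b = nu a + c.
Proof. destruct Hnu as [_ [_ [Hshift _]]]. auto. Qed.

Lemma OS_homogeneous (a b : C X) t : 0 <= t -> (forall x, b x = t * a x) -> nu b = t * nu a.
Proof. destruct Hnu as [_ [_ [_ [_ [Hhom _]]]]]. auto. Qed.

Lemma OS_const a : nu (cconst X a) = a.
Proof.
  destruct Hnu as [_ [Hnormed _]].
  rewrite (OS_shift (cconst X 1) (cconst X a) (a - 1)).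
  - rewrite Hnormed; [ring|]. reflexivity.
  - intros. rewrite !cconst_eq. ring.
Qed.

Lemma OS_le_add (a b c : C X) : (forall x, a x <= b x + c x) -> nu a <= nu b + nu c.
Proof.
  intros H. destruct Hnu as [_ [_ [_ [_ [_ Hsub]]]]].
  apply Rle_trans with (nu (cadd b c)).
  - apply OS_mono. intros x. rewrite cadd_eq. auto.
  - apply Hsub. intros x. now rewrite cadd_eq.
Qed.

Lemma OS_dist (a b : C X) eta :
  (forall x, Rabs (a x - b x) <= eta) -> Rabs (nu a - nu b) <= eta.
Proof.
  intros H.
  assert (Hle : forall a b : C X, (forall x, a x <= b x + eta) -> nu a <= nu b + eta).
  { intros a' b' Hab. rewrite <- (OS_shift b' (cadd b' (cconst X eta)) eta).
    - apply OS_mono. intros x. rewrite cadd_eq, cconst_eq. auto.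
    - intros x. now rewrite cadd_eq, cconst_eq. }
  apply Rabs_le. split.
  - assert (nu b <= nu a + eta); [|lra].
    apply Hle. intros x. pose proof (Rabs_le_between _ _ (H x)). lra.
  - assert (nu a <= nu b + eta); [|lra].
    apply Hle. intros x. pose proof (Rabs_le_between _ _ (H x)). lra.
Qed.

End OSFunctionals.

Fixpoint sumR (n : nat) (F : nat -> R) : R :=
  match n with O => 0 | S k => sumR k F + F k end.

Lemma sumR_ext n F G : (forall i, (i < n)%nat -> F i = G i) -> sumR n F = sumR n G.
Proof.
  induction n; simpl; intros H; auto.
  rewrite IHn, H; auto; intros; apply H; lia.
Qed.

Lemma sumR_add n F G : sumR n (fun i => F i + G i) = sumR n F + sumR n G.
Proof. induction n; simpl; [ring|]. rewrite IHn. ring. Qed.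

Lemma sumR_scale n a F : sumR n (fun i => a * F i) = a * sumR n F.
Proof. induction n; simpl; [ring|]. rewrite IHn. ring. Qed.

Lemma sumR_const n a : sumR n (fun _ => a) = INR n * a.
Proof. induction n; [simpl; ring|]. cbn [sumR]. rewrite IHn, S_INR. ring. Qed.

Lemma sumR_le n F G : (forall i, (i < n)%nat -> F i <= G i) -> sumR n F <= sumR n G.
Proof.
  induction n; simpl; intros H; [lra|].
  assert (sumR n F <= sumR n G) by (apply IHn; intros; apply H; lia).
  pose proof (H n (Nat.lt_succ_diag_r n)). lra.
Qed.

Lemma sumR_abs n F : Rabs (sumR n F) <= sumR n (fun i => Rabs (F i)).
Proof.
  induction n; simpl; [rewrite Rabs_R0; lra|].
  pose proof (Rabs_triang (sumR n F) (F n)). lra.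
Qed.

Lemma sumR_nonneg n F : (forall i, (i < n)%nat -> 0 <= F i) -> 0 <= sumR n F.
Proof.
  intros H. rewrite <- (Rmult_0_r (INR n)), <- sumR_const. now apply sumR_le.
Qed.

Lemma le_sumR n F i : (forall j, (j < n)%nat -> 0 <= F j) -> (i < n)%nat -> F i <= sumR n F.
Proof.
  induction n; simpl; intros H Hi; [lia|].
  assert (Hrest : forall j, (j < n)%nat -> 0 <= F j) by (intros; apply H; lia).
  destruct (Nat.eq_dec i n) as [->|E].
  - pose proof (sumR_nonneg n F Hrest). lra.
  - pose proof (IHn Hrest ltac:(lia)). pose proof (H n ltac:(lia)). lra.
Qed.

Definition dot (n : nat) (c p : nat -> R) : R := sumR n (fun i => c i * p i).

Lemma dot_zero_l n p : dot n (fun _ => 0) p = 0.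
Proof.
  unfold dot. rewrite (sumR_ext n _ (fun _ => 0)), sumR_const; [ring|]. intros; ring.
Qed.

Lemma dot_scale_l n t c p : dot n (fun i => t * c i) p = t * dot n c p.
Proof. unfold dot. rewrite <- sumR_scale. apply sumR_ext. intros; ring. Qed.

Lemma dot_add_l n c1 c2 p : dot n (fun i => c1 i + c2 i) p = dot n c1 p + dot n c2 p.
Proof. unfold dot. rewrite <- sumR_add. apply sumR_ext. intros; ring. Qed.

Lemma dot_shift_r n c p e : dot n c (fun i => p i + e) = dot n c p + e * sumR n c.
Proof. unfold dot. rewrite <- sumR_scale, <- sumR_add. apply sumR_ext. intros; ring. Qed.

Lemma dot_basis_l n i p : (i < n)%nat -> dot n (fun j => if Nat.eqb j i then 1 else 0) p = p i.
Proof.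
  unfold dot. induction n; simpl; intros Hi; [lia|].
  destruct (Nat.eq_dec i n) as [->|E].
  - rewrite Nat.eqb_refl, (sumR_ext n _ (fun _ => 0)), sumR_const; [ring|].
    intros j Hj. destruct (Nat.eqb_spec j n); [lia | ring].
  - rewrite IHn by lia. destruct (Nat.eqb_spec n i); [lia | ring].
Qed.

Section LinearCombinations.

Context {X : Top} (Phi : nat -> C X).

Definition lincomb (n : nat) (c : nat -> R) (x : X) : R := dot n c (fun i => Phi i x).

Lemma lincomb_eps_continuous n c : eps_continuous X (lincomb n c).
Proof.
  unfold lincomb, dot. induction n as [|k IH]; simpl.
  - apply eps_continuous_const.
  - apply (eps_continuous_add X (fun x => sumR k (fun i => c i * Phi i x))); [exact IH|].
    apply eps_continuous_scale, cont_real_eps_continuous, (proj2_sig (Phi k)).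
Qed.

Definition lincombC (n : nat) (c : nat -> R) : C X :=
  exist _ (lincomb n c) (eps_continuous_cont_real _ _ (lincomb_eps_continuous n c)).

Lemma lincombC_eq n c x : lincombC n c x = lincomb n c x.
Proof. reflexivity. Qed.

Lemma OS_lincomb_le (nu : C X -> R) n c : in_OS nu ->
  (forall i, (i < n)%nat -> 0 <= c i) -> nu (lincombC n c) <= dot n c (fun i => nu (Phi i)).
Proof.
  intros Hnu. unfold dot. induction n as [|k IH]; intros Hc; simpl.
  - rewrite <- (OS_const X nu Hnu 0). apply (OS_mono X nu Hnu). intros x.
    rewrite lincombC_eq, cconst_eq. unfold lincomb, dot. simpl. lra.
  - apply Rle_trans with (nu (lincombC k c) + nu (cscale (c k) (Phi k))).
    + apply (OS_le_add X nu Hnu). intros x.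
      rewrite cscale_eq, !lincombC_eq. unfold lincomb, dot. simpl. lra.
    + rewrite (OS_homogeneous X nu Hnu (Phi k) (cscale (c k) (Phi k)) (c k));
        [| apply Hc; lia | reflexivity].
      assert (nu (lincombC k c) <= sumR k (fun i => c i * nu (Phi i)))
        by (apply IH; intros; apply Hc; lia).
      lra.
Qed.

Lemma lincomb_dist n c c' a M x : 0 <= a ->
  (forall i, (i < n)%nat -> Rabs (c i - c' i) <= a) ->
  (forall i, (i < n)%nat -> Rabs (Phi i x) <= M) ->
  Rabs (lincomb n c x - lincomb n c' x) <= INR n * (a * M).
Proof.
  intros Ha Hc HPhi. unfold lincomb, dot.
  rewrite <- (Rmult_1_l (sumR n (fun i => c' i * Phi i x))), <- sumR_scale.
  assert (Hsub : forall G, sumR n (fun i => c i * Phi i x) - sumR n G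
                           = sumR n (fun i => c i * Phi i x - G i)).
  { intros G. replace (sumR n (fun i => c i * Phi i x - G i))
      with (sumR n (fun i => c i * Phi i x + -1 * G i)) by (apply sumR_ext; intros; ring).
    rewrite sumR_add, sumR_scale. ring. }
  rewrite Hsub. eapply Rle_trans; [apply sumR_abs|].
  rewrite <- sumR_const. apply sumR_le. intros i Hi.
  replace (c i * Phi i x - 1 * (c' i * Phi i x)) with ((c i - c' i) * Phi i x) by ring.
  rewrite Rabs_mult. apply Rmult_le_compat; auto using Rabs_pos.
Qed.

End LinearCombinations.

Lemma nat_floor_exists m y : 0 <= y <= INR m -> exists j, (j <= m)%nat /\ INR j <= y <= INR j + 1.
Proof.
  induction m; intros Hy.
  - exists 0%nat. simpl in *. split; [lia | lra].
  - rewrite S_INR in Hy. destruct (Rle_lt_dec y (INR m)).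
    + destruct IHm as [j [Hj Hjy]]; [lra|]. exists j. split; [lia | auto].
    + exists m. split; [lia | lra].
Qed.

Lemma unit_interval_round (N : nat) x : (0 < N)%nat -> 0 <= x <= 1 ->
  exists j, (j <= N)%nat /\ Rabs (x - INR j / INR N) <= 1 / INR N.
Proof.
  intros HN Hx. assert (HNr : 0 < INR N) by now apply lt_0_INR.
  destruct (nat_floor_exists N (x * INR N)) as [j [Hj Hjy]]; [nra|].
  exists j. split; auto.
  replace (x - INR j / INR N) with ((x * INR N - INR j) * / INR N) by (field; lra).
  rewrite Rabs_mult, (Rabs_right (/ INR N)) by (apply Rle_ge, Rlt_le, Rinv_0_lt_compat; auto).
  unfold Rdiv. rewrite Rmult_1_l. rewrite <- (Rmult_1_l (/ INR N)) at 2.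
  apply Rmult_le_compat_r; [apply Rlt_le, Rinv_0_lt_compat; auto|].
  apply Rabs_le. lra.
Qed.

(* [grid N k] lists the vectors whose first [k] coordinates lie in
   [{0, 1/N, ..., 1}] and whose other coordinates vanish. *)
Fixpoint grid (N : nat) (k : nat) : list (nat -> R) :=
  match k with
  | O => (fun _ => 0) :: nil
  | S k' => flat_map (fun u => map (fun j => fun i => if Nat.eqb i k' then INR j / INR N else u i)
                                  (seq 0 (S N))) (grid N k')
  end.

Lemma grid_approx (N : nat) k u : (0 < N)%nat -> (forall i, (i < k)%nat -> 0 <= u i <= 1) ->
  exists u', In u' (grid N k) /\ forall i, (i < k)%nat -> Rabs (u i - u' i) <= 1 / INR N.
Proof.
  intros HN. induction k; intros Hu.
  - exists (fun _ => 0). simpl. split; auto. intros; lia.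
  - destruct IHk as [u' [Hin Hu']]; [intros; apply Hu; lia|].
    destruct (unit_interval_round N (u k) HN (Hu k ltac:(lia))) as [j [Hj Hjx]].
    exists (fun i => if Nat.eqb i k then INR j / INR N else u' i). split.
    + cbn [grid]. apply in_flat_map. exists u'. split; auto.
      apply in_map_iff. exists j. split; auto. apply in_seq. lia.
    + intros i Hi. destruct (Nat.eqb_spec i k); [now subst|]. apply Hu'. lia.
Qed.

Definition unit_grid (N : nat) : list R := map (fun j => INR j / INR N) (seq 0 (S N)).

Lemma unit_grid_approx N t : (0 < N)%nat -> 0 <= t <= 1 ->
  exists t', In t' (unit_grid N) /\ Rabs (t - t') <= 1 / INR N.
Proof.
  intros HN Ht. destruct (unit_interval_round N t HN Ht) as [j [Hj Hjx]].
  exists (INR j / INR N). split; auto.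
  apply in_map_iff. exists j. split; auto. apply in_seq. lia.
Qed.

Lemma list_pos_lower_bound {A : Type} (l : list (A * R)) : (forall p, In p l -> 0 < snd p) ->
  exists e, 0 < e /\ forall p, In p l -> e < snd p.
Proof.
  induction l as [|a l IH]; intros H.
  - exists 1. split; [lra | simpl; tauto].
  - destruct IH as [e [He Hl]]; [intros; apply H; simpl; auto|].
    pose proof (H a (or_introl eq_refl)).
    exists (Rmin e (snd a / 2)). split; [apply Rmin_glb_lt; lra|].
    pose proof (Rmin_l e (snd a / 2)). pose proof (Rmin_r e (snd a / 2)).
    intros p [<-|Hp]; [lra|]. specialize (Hl p Hp). lra.
Qed.

Lemma C_family_bounded (X : Top) (Phi : nat -> C X) n : top_compact X ->
  exists M, 0 < M /\ forall i, (i < n)%nat -> forall x, Rabs (Phi i x) <= M.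
Proof.
  intros hX. induction n.
  - exists 1. split; [lra | intros; lia].
  - destruct IHn as [M [HM HMi]]. destruct (C_bounded X (Phi n) hX) as [B HB].
    pose proof (Rmax_l M B). pose proof (Rmax_r M B).
    exists (Rmax M B). split; [lra|].
    intros i Hi x. destruct (Nat.eq_dec i n) as [->|E].
    + pose proof (HB x). lra.
    + pose proof (HMi i ltac:(lia) x). lra.
Qed.

Section Lift.

Variables (X Y : Top) (f : X -> Y) (mu : C Y -> R) (Phi : nat -> C X) (n : nat) (p : nat -> R).
Hypotheses (hX : top_compact X) (Hmu : in_OS mu).

Definition dominates (phi : X -> R) (psi : C Y) (c : nat -> R) : Prop :=
  (forall i, (i < n)%nat -> 0 <= c i) /\ forall x, phi x <= psi (f x) + lincomb Phi n c x.

Definition cost (psi : C Y) (c : nat -> R) : R := mu psi + dot n c p.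

Definition lift (phi : C X) : R :=
  glb (fun v => exists psi c, dominates phi psi c /\ v = cost psi c).

Definition price_condition : Prop :=
  forall (psi0 psi : C Y) c, dominates (fun x => psi0 (f x)) psi c -> mu psi0 <= cost psi c.

Hypothesis Hprice : price_condition.

Lemma dominates_const (phi : X -> R) t :
  (forall x, phi x <= t) -> dominates phi (cconst Y t) (fun _ => 0).
Proof.
  intros Ht. split; [intros; lra|].
  intros x. unfold lincomb. rewrite dot_zero_l, cconst_eq. specialize (Ht x). lra.
Qed.

Lemma cost_const t : cost (cconst Y t) (fun _ => 0) = t.
Proof. unfold cost. rewrite dot_zero_l, (OS_const Y mu Hmu). ring. Qed.

Lemma dominates_shift (a b : X -> R) psi c s :
  (forall x, b x = a x + s) -> dominates a psi c -> dominates b (cadd psi (cconst Y s)) c.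
Proof.
  intros Hb [Hc Ha]. split; auto. intros x.
  rewrite Hb, cadd_eq, cconst_eq. specialize (Ha x). lra.
Qed.

Lemma dominates_scale (a b : X -> R) psi c t : 0 <= t ->
  (forall x, b x = t * a x) -> dominates a psi c ->
  dominates b (cscale t psi) (fun i => t * c i).
Proof.
  intros Ht Hb [Hc Ha]. split; [intros i Hi; specialize (Hc i Hi); nra|]. intros x.
  unfold lincomb. rewrite Hb, cscale_eq, dot_scale_l. fold (lincomb Phi n c x).
  specialize (Ha x). nra.
Qed.

Lemma dominates_add (a b ab : X -> R) psi1 psi2 c1 c2 :
  (forall x, ab x = a x + b x) -> dominates a psi1 c1 -> dominates b psi2 c2 ->
  dominates ab (cadd psi1 psi2) (fun i => c1 i + c2 i).
Proof.
  intros Hab [Hc1 Ha] [Hc2 Hb].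
  split; [intros i Hi; specialize (Hc1 i Hi); specialize (Hc2 i Hi); lra|]. intros x.
  unfold lincomb. rewrite Hab, cadd_eq, dot_add_l. fold (lincomb Phi n c1 x) (lincomb Phi n c2 x).
  specialize (Ha x). specialize (Hb x). lra.
Qed.

Lemma cost_ge_of_lower_bound (phi : X -> R) t psi c :
  (forall x, t <= phi x) -> dominates phi psi c -> t <= cost psi c.
Proof.
  intros Ht [Hc Hphi]. rewrite <- (OS_const Y mu Hmu t). apply Hprice. split; auto.
  intros x. rewrite cconst_eq. specialize (Ht x). specialize (Hphi x). lra.
Qed.

Lemma lift_le (phi : C X) psi c : dominates phi psi c -> lift phi <= cost psi c.
Proof.
  intros Hdom. apply glb_le; [|eauto].
  destruct (C_bounded X phi hX) as [B HB]. exists (- B).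
  intros v [psi' [c' [Hdom' ->]]]. apply (cost_ge_of_lower_bound phi); auto.
  intros x. pose proof (Rabs_le_between _ _ (HB x)). lra.
Qed.

Lemma lift_ge (phi : C X) a :
  (forall psi c, dominates phi psi c -> a <= cost psi c) -> a <= lift phi.
Proof.
  intros Ha. apply glb_ge.
  - destruct (C_bounded X phi hX) as [B HB]. exists B, (cconst Y B), (fun _ => 0).
    split; [|now rewrite cost_const]. apply dominates_const.
    intros x. pose proof (Rabs_le_between _ _ (HB x)). lra.
  - intros v [psi [c [Hdom ->]]]. auto.
Qed.

Lemma lift_in_V : in_V lift.
Proof.
  intros phi. split.
  - intros t Ht. apply lift_ge. intros psi c. now apply cost_ge_of_lower_bound.
  - intros t Ht. rewrite <- (cost_const t). now apply lift_le, dominates_const.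
Qed.

Lemma lift_mono (a b : C X) : (forall x, a x <= b x) -> lift a <= lift b.
Proof.
  intros Hab. apply lift_ge. intros psi c [Hc Hb]. apply lift_le. split; auto.
  intros x. specialize (Hab x). specialize (Hb x). lra.
Qed.

Lemma lift_shift_le (a b : C X) s : (forall x, b x = a x + s) -> lift b <= lift a + s.
Proof.
  intros Hb. assert (lift b - s <= lift a); [|lra].
  apply lift_ge. intros psi c Hdom.
  pose proof (lift_le b _ _ (dominates_shift a b psi c s Hb Hdom)) as H.
  unfold cost in *. rewrite (OS_shift Y mu Hmu psi (cadd psi (cconst Y s)) s) in H; [lra|].
  intros. now rewrite cadd_eq, cconst_eq.
Qed.

Lemma lift_scale_le (a b : C X) t : 0 < t -> (forall x, b x = t * a x) -> lift b <= t * lift a.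
Proof.
  intros Ht Hb. assert (lift b / t <= lift a).
  2: { apply Rmult_le_reg_r with (/ t); [now apply Rinv_0_lt_compat|].
       replace (t * lift a * / t) with (lift a) by (field; lra). exact H. }
  apply lift_ge. intros psi c Hdom.
  pose proof (lift_le b _ _ (dominates_scale a b psi c t ltac:(lra) Hb Hdom)) as H.
  unfold cost in *. rewrite dot_scale_l in H.
  rewrite (OS_homogeneous Y mu Hmu psi (cscale t psi) t) in H; [|lra|reflexivity].
  apply Rmult_le_reg_r with t; auto. unfold Rdiv. rewrite Rmult_assoc, Rinv_l by lra. lra.
Qed.

Lemma lift_subadditive (a b ab : C X) : (forall x, ab x = a x + b x) -> lift ab <= lift a + lift b.
Proof.
  intros Hab.
  assert (H : forall psi2 c2, dominates b psi2 c2 -> lift ab - cost psi2 c2 <= lift a).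
  { intros psi2 c2 Hdom2. apply lift_ge. intros psi1 c1 Hdom1.
    pose proof (lift_le ab _ _ (dominates_add a b ab psi1 psi2 c1 c2 Hab Hdom1 Hdom2)) as H.
    unfold cost in *. rewrite dot_add_l in H.
    pose proof (OS_le_add Y mu Hmu (cadd psi1 psi2) psi1 psi2 (fun y => Req_le _ _ (cadd_eq Y psi1 psi2 y))).
    lra. }
  assert (lift ab - lift a <= lift b); [|lra].
  apply lift_ge. intros psi2 c2 Hdom2. specialize (H psi2 c2 Hdom2). lra.
Qed.

Lemma lift_in_OS : in_OS lift.
Proof.
  pose proof lift_in_V as HV.
  assert (Hconst : forall a : C X, (forall x, a x = 0) -> lift a = 0).
  { intros a Ha. destruct (HV a) as [H1 H2]. apply Rle_antisym.
    - apply H2. intros; rewrite Ha; lra.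
    - apply H1. intros; rewrite Ha; lra. }
  split; [exact HV|]. split; [|split; [|split; [exact lift_mono|split]]].
  - intros one Hone. destruct (HV one) as [H1 H2]. apply Rle_antisym.
    + apply H2. intros; rewrite Hone; lra.
    + apply H1. intros; rewrite Hone; lra.
  - intros a b s Hb. apply Rle_antisym; [now apply lift_shift_le|].
    assert (lift a <= lift b + - s); [|lra]. apply lift_shift_le. intros x; rewrite Hb; ring.
  - intros a b t Ht Hb. destruct (Rle_lt_or_eq_dec 0 t Ht) as [Htpos|<-].
    + apply Rle_antisym; [now apply lift_scale_le|].
      assert (lift a <= / t * lift b).
      { apply lift_scale_le; [now apply Rinv_0_lt_compat|]. intros x. rewrite Hb. field. lra. }
      apply Rmult_le_reg_l with (/ t); [now apply Rinv_0_lt_compat|].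
      replace (/ t * (t * lift a)) with (lift a) by (field; lra). exact H.
    + rewrite Rmult_0_l. apply Hconst. intros x. rewrite Hb. ring.
  - exact lift_subadditive.
Qed.

Lemma lift_comp (hf : top_continuous f) (psi0 : C Y) : lift (Ccomp f hf psi0) = mu psi0.
Proof.
  apply Rle_antisym.
  - replace (mu psi0) with (cost psi0 (fun _ => 0)) by (unfold cost; rewrite dot_zero_l; ring).
    apply lift_le. split; [intros; lra|].
    intros x. unfold lincomb. rewrite dot_zero_l. simpl. lra.
  - apply lift_ge. intros psi c Hdom. now apply Hprice.
Qed.

Lemma lift_le_price i : (i < n)%nat -> lift (Phi i) <= p i.
Proof.
  intros Hi. replace (p i) with (cost (cconst Y 0) (fun j => if Nat.eqb j i then 1 else 0)).
  - apply lift_le. split; [intros j _; destruct (Nat.eqb j i); lra|].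
    intros x. unfold lincomb. rewrite cconst_eq, dot_basis_l by auto. lra.
  - unfold cost. rewrite dot_basis_l, (OS_const Y mu Hmu) by auto. ring.
Qed.

End Lift.

Lemma dot_div_l n c p s : 0 < s -> dot n c p = s * dot n (fun i => c i / s) p.
Proof.
  intros Hs. rewrite <- dot_scale_l. unfold dot. apply sumR_ext. intros. field. lra.
Qed.

Lemma le_of_forall_gt A B e S : 0 < e -> (forall s, S < s -> A <= B + e * s) -> A <= B + e * S.
Proof.
  intros He H. apply Rnot_lt_le. intros Hlt.
  set (d := A - (B + e * S)).
  specialize (H (S + d / (2 * e))).
  assert (0 < d / (2 * e)) by (apply Rdiv_lt_0_compat; unfold d; lra).
  assert (e * (S + d / (2 * e)) = e * S + d / 2) by (field; lra).
  assert (A <= B + e * (S + d / (2 * e))) by (apply H; lra).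
  unfold d in *. lra.
Qed.

Definition unit_cube (n : nat) (u : nat -> R) : Prop := forall i, (i < n)%nat -> 0 <= u i <= 1.

Lemma unit_cube_div n c s : (forall i, (i < n)%nat -> 0 <= c i) -> sumR n c <= s -> 0 < s ->
  unit_cube n (fun i => c i / s).
Proof.
  intros Hc HS Hs i Hi. pose proof (le_sumR n c i Hc Hi). pose proof (Hc i Hi).
  split; [apply Rmult_le_pos; auto; now apply Rlt_le, Rinv_0_lt_compat|].
  apply Rmult_le_reg_r with s; auto. unfold Rdiv. rewrite Rmult_assoc, Rinv_l by lra. lra.
Qed.

Section Tests.

Variables (X Y : Top) (f : X -> Y).
Hypotheses (hX : top_compact X) (hYH : top_hausdorff Y) (hf : top_continuous f)
  (hopen : open_map f) (hsurj : top_surjective f).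
Variables (nu : C X -> R) (mu : C Y -> R) (Phi : nat -> C X) (n : nat) (eps : R).
Hypotheses (Hnu : in_OS nu) (Hmu : in_OS mu) (Heps : 0 < eps).

Local Notation fibre_sup := (fibre_supC X Y f hX hYH hf hopen hsurj).
Local Notation fibre_inf := (fibre_infC X Y f hX hYH hf hopen hsurj).
Local Notation pull g := (Ccomp f hf g).

Definition lower_test (u : nat -> R) : C Y := fibre_inf (lincombC Phi n u).

Definition upper_test (k : nat) (t : R) (u : nat -> R) : C Y :=
  fibre_sup (cadd (cscale t (Phi k)) (cscale (-1) (lincombC Phi n u))).

Definition lower_tests_pass : Prop :=
  forall u, unit_cube n u -> mu (lower_test u) <= nu (pull (lower_test u)) + eps.

Definition upper_tests_pass : Prop :=
  forall k t u, (k < n)%nat -> 0 <= t <= 1 -> unit_cube n u ->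
    nu (pull (upper_test k t u)) - eps <= mu (upper_test k t u).

Definition prices (i : nat) : R := nu (Phi i) + eps.

Lemma lower_test_le_of_dominates (psi0 psi : C Y) c s :
  dominates X Y f Phi n (fun x => psi0 (f x)) psi c -> 0 < s ->
  forall y, psi0 y <= psi y + s * lower_test (fun i => c i / s) y.
Proof.
  intros [_ Hdom] Hs y.
  assert ((psi0 y - psi y) / s <= lower_test (fun i => c i / s) y).
  { apply fibre_infC_ge. intros x <-. rewrite lincombC_eq.
    specialize (Hdom x). unfold lincomb in *. rewrite (dot_div_l n c _ s Hs) in Hdom.
    apply Rmult_le_reg_r with s; auto. unfold Rdiv. rewrite Rmult_assoc, Rinv_l by lra. lra. }
  apply Rmult_le_compat_l with (r := s) in H; [|lra].
  replace (s * ((psi0 y - psi y) / s)) with (psi0 y - psi y) in H by (field; lra). lra.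
Qed.

Lemma mu_lower_test_le u : lower_tests_pass -> unit_cube n u ->
  mu (lower_test u) <= dot n u (fun i => nu (Phi i)) + eps.
Proof.
  intros Hpass Hu. specialize (Hpass u Hu).
  assert (nu (pull (lower_test u)) <= nu (lincombC Phi n u)).
  { apply (OS_mono X nu Hnu). intros x. apply fibre_infC_le. }
  pose proof (OS_lincomb_le Phi nu n u Hnu (fun i Hi => proj1 (Hu i Hi))). lra.
Qed.

(* Lower tests with all scalings [u = c / s], [s > sum c], yield the price
   condition up to [eps * s]; letting [s] decrease to [sum c] gives it exactly. *)
Lemma price_condition_of_lower_tests :
  lower_tests_pass -> price_condition X Y f mu Phi n prices.
Proof.
  intros Hpass psi0 psi c Hdom. pose proof (proj1 Hdom) as Hc.
  unfold cost, prices. rewrite dot_shift_r, <- Rplus_assoc.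
  apply le_of_forall_gt; auto. intros s HsS.
  assert (Hs : 0 < s) by (pose proof (sumR_nonneg n c Hc); lra).
  set (u := fun i => c i / s).
  assert (Hu : unit_cube n u) by (apply unit_cube_div; auto; lra).
  pose proof (lower_test_le_of_dominates psi0 psi c s Hdom Hs) as Hpt. fold u in Hpt.
  assert (H1 : mu psi0 <= mu psi + mu (cscale s (lower_test u))).
  { apply (OS_le_add Y mu Hmu). intros y. rewrite cscale_eq. apply Hpt. }
  rewrite (OS_homogeneous Y mu Hmu (lower_test u) (cscale s (lower_test u)) s) in H1; [|lra|intros; reflexivity].
  pose proof (mu_lower_test_le u Hpass Hu) as H2.
  rewrite (dot_div_l n c _ s Hs). fold u.
  apply Rmult_le_compat_l with (r := s) in H2; [|lra]. lra.
Qed.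

Lemma upper_test_le_of_dominates k (psi : C Y) c s :
  dominates X Y f Phi n (Phi k) psi c -> 0 < s ->
  forall y, upper_test k (1 / s) (fun i => c i / s) y <= / s * psi y.
Proof.
  intros [_ Hdom] Hs y. apply fibre_supC_le. intros x <-.
  rewrite cadd_eq, !cscale_eq, lincombC_eq.
  specialize (Hdom x). unfold lincomb in *. rewrite (dot_div_l n c _ s Hs) in Hdom.
  apply Rmult_le_reg_r with s; auto.
  replace ((1 / s * Phi k x + -1 * dot n (fun i => c i / s) (fun i => Phi i x)) * s)
    with (Phi k x - s * dot n (fun i => c i / s) (fun i => Phi i x)) by (field; lra).
  replace (/ s * psi (f x) * s) with (psi (f x)) by (field; lra). lra.
Qed.

Lemma nu_upper_test_ge k t u : unit_cube n u -> 0 <= t ->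
  t * nu (Phi k) - dot n u (fun i => nu (Phi i)) <= nu (pull (upper_test k t u)).
Proof.
  intros Hu Ht. set (g := cadd (cscale t (Phi k)) (cscale (-1) (lincombC Phi n u))).
  assert (nu g <= nu (pull (upper_test k t u))).
  { apply (OS_mono X nu Hnu). intros x. apply fibre_supC_ge. }
  assert (nu (cscale t (Phi k)) <= nu g + nu (lincombC Phi n u)).
  { apply (OS_le_add X nu Hnu). intros x. unfold g. rewrite cadd_eq, !cscale_eq. lra. }
  rewrite (OS_homogeneous X nu Hnu (Phi k) (cscale t (Phi k)) t) in H0 by (auto || (intros; reflexivity)).
  pose proof (OS_lincomb_le Phi nu n u Hnu (fun i Hi => proj1 (Hu i Hi))). lra.
Qed.

(* Testing with [s = 1 + sum c] keeps the scaling [1 / s] of [Phi k] in [[0, 1]]. *)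
Lemma lift_ge_of_upper_tests k : upper_tests_pass ->
  price_condition X Y f mu Phi n prices -> (k < n)%nat ->
  nu (Phi k) - eps <= lift X Y f mu Phi n prices (Phi k).
Proof.
  intros Hpass Hprice Hk. apply lift_ge; auto. intros psi c Hdom.
  pose proof (proj1 Hdom) as Hc. pose proof (sumR_nonneg n c Hc) as HS.
  unfold cost, prices. rewrite dot_shift_r.
  set (s := 1 + sumR n c). assert (Hs : 0 < s) by (unfold s; lra).
  set (u := fun i => c i / s).
  assert (Hu : unit_cube n u) by (apply unit_cube_div; auto; unfold s; lra).
  assert (Ht : 0 <= 1 / s <= 1).
  { split; [apply Rlt_le, Rdiv_lt_0_compat; lra|].
    apply Rmult_le_reg_r with s; auto. unfold Rdiv. rewrite Rmult_assoc, Rinv_l by lra. unfold s; lra. }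
  assert (H1 : mu (upper_test k (1 / s) u) <= / s * mu psi).
  { rewrite <- (OS_homogeneous Y mu Hmu psi (cscale (/ s) psi) (/ s)) by
      (try (intros; reflexivity); now apply Rlt_le, Rinv_0_lt_compat).
    apply (OS_mono Y mu Hmu). apply (upper_test_le_of_dominates k psi c s Hdom Hs). }
  pose proof (Hpass k (1 / s) u Hk Ht Hu) as H2.
  pose proof (nu_upper_test_ge k (1 / s) u Hu (proj1 Ht)) as H3.
  rewrite (dot_div_l n c _ s Hs). fold u.
  set (B := dot n u (fun i => nu (Phi i))) in *.
  assert (H4 : 1 / s * nu (Phi k) - B - eps <= / s * mu psi) by lra.
  apply Rmult_le_compat_l with (r := s) in H4; [|lra].
  replace (s * (1 / s * nu (Phi k) - B - eps)) with (nu (Phi k) - s * B - eps * s) in H4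
    by (field; lra).
  replace (s * (/ s * mu psi)) with (mu psi) in H4 by (field; lra).
  assert (eps * s = eps + eps * sumR n c) by (unfold s; ring). lra.
Qed.

Lemma OS_lift_near : lower_tests_pass -> upper_tests_pass ->
  exists nu', in_OS nu' /\ (forall k, (k < n)%nat -> Rabs (nu' (Phi k) - nu (Phi k)) <= eps) /\
    OSmap f hf nu' = mu.
Proof.
  intros Hlow Hup. pose proof (price_condition_of_lower_tests Hlow) as Hprice.
  exists (lift X Y f mu Phi n prices). split; [|split].
  - now apply lift_in_OS.
  - intros k Hk. pose proof (lift_le_price X Y f mu Phi n prices hX Hmu Hprice k Hk).
    pose proof (lift_ge_of_upper_tests k Hup Hprice Hk). unfold prices in *.
    apply Rabs_le. lra.
  - extensionality psi. unfold OSmap. now apply lift_comp.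
Qed.


Definition grid_tests (N : nat) : list (C Y) :=
  map lower_test (grid N n) ++
  flat_map (fun k => flat_map (fun t => map (upper_test k t) (grid N n)) (unit_grid N)) (seq 0 n).

Lemma test_transfer (A A' : C Y) eta delta :
  (forall y, Rabs (A y - A' y) <= eta) -> Rabs (mu A' - nu (pull A')) < delta ->
  Rabs (mu A - nu (pull A)) <= delta + 2 * eta.
Proof.
  intros Hclose Htest.
  pose proof (Rabs_le_between _ _ (OS_dist Y mu Hmu A A' eta Hclose)).
  pose proof (Rabs_le_between _ _
    (OS_dist X nu Hnu (pull A) (pull A') eta (fun x => Hclose (f x)))).
  apply Rabs_def2 in Htest. apply Rabs_le. lra.
Qed.

Section Grid.

Variables (M : R) (N : nat).
Hypotheses (HM : forall i, (i < n)%nat -> forall x, Rabs (Phi i x) <= M) (HM0 : 0 <= M)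
  (HN : (0 < N)%nat) (Hfine : (INR n + 1) * M / INR N <= eps / 4)
  (Hgrid : forall psi, In psi (grid_tests N) -> Rabs (mu psi - nu (pull psi)) < eps / 2).

Lemma grid_step_bounds : 0 <= M / INR N /\ INR n * (M / INR N) + M / INR N <= eps / 4.
Proof.
  assert (0 < INR N) by now apply lt_0_INR.
  split; [apply Rmult_le_pos; auto; now apply Rlt_le, Rinv_0_lt_compat|].
  replace (INR n * (M / INR N) + M / INR N) with ((INR n + 1) * M / INR N) by (field; lra).
  exact Hfine.
Qed.

Lemma lincomb_grid_approx u : unit_cube n u -> exists u', In u' (grid N n) /\
  forall x, Rabs (lincomb Phi n u x - lincomb Phi n u' x) <= INR n * (M / INR N).
Proof.
  intros Hu. destruct (grid_approx N n u HN Hu) as [u' [Hin Hclose]].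
  assert (0 < INR N) by now apply lt_0_INR.
  exists u'. split; auto. intros x.
  replace (M / INR N) with (1 / INR N * M) by (field; lra).
  apply lincomb_dist; auto. apply Rlt_le, Rdiv_lt_0_compat; lra.
Qed.

Lemma lower_tests_pass_of_grid : lower_tests_pass.
Proof.
  intros u Hu. destruct (lincomb_grid_approx u Hu) as [u' [Hin Hclose]].
  pose proof grid_step_bounds as [Hstep Heta].
  assert (Htest : Rabs (mu (lower_test u') - nu (pull (lower_test u'))) < eps / 2).
  { apply Hgrid, in_or_app. left. now apply in_map. }
  pose proof (test_transfer (lower_test u) (lower_test u') _ _
    (fibre_infC_dist X Y f hX hYH hf hopen hsurj (lincombC Phi n u) (lincombC Phi n u') _ Hclose) Htest) as H.
  apply Rabs_le_between in H. lra.
Qed.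

Lemma upper_tests_pass_of_grid : upper_tests_pass.
Proof.
  intros k t u Hk Ht Hu. destruct (lincomb_grid_approx u Hu) as [u' [Hin Hclose]].
  destruct (unit_grid_approx N t HN Ht) as [t' [Hint Ht']].
  pose proof grid_step_bounds as [Hstep Heta].
  assert (Hdist : forall x, Rabs ((t * Phi k x + -1 * lincomb Phi n u x)
                 - (t' * Phi k x + -1 * lincomb Phi n u' x)) <= INR n * (M / INR N) + M / INR N).
  { intros x.
    replace (t * Phi k x + -1 * lincomb Phi n u x - (t' * Phi k x + -1 * lincomb Phi n u' x))
      with ((t - t') * Phi k x + - (lincomb Phi n u x - lincomb Phi n u' x)) by ring.
    eapply Rle_trans; [apply Rabs_triang|]. rewrite Rabs_Ropp, Rabs_mult.
    assert (Rabs (t - t') * Rabs (Phi k x) <= 1 / INR N * M).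
    { apply Rmult_le_compat; auto using Rabs_pos. }
    replace (M / INR N) with (1 / INR N * M) at 2 by (field; apply not_0_INR; lia).
    specialize (Hclose x). lra. }
  assert (Htest : Rabs (mu (upper_test k t' u') - nu (pull (upper_test k t' u'))) < eps / 2).
  { apply Hgrid, in_or_app. right. apply in_flat_map. exists k.
    split; [apply in_seq; lia|]. apply in_flat_map. exists t'. split; auto. now apply in_map. }
  pose proof (test_transfer (upper_test k t u) (upper_test k t' u') _ _
    (fibre_supC_dist X Y f hX hYH hf hopen hsurj
      (cadd (cscale t (Phi k)) (cscale (-1) (lincombC Phi n u)))
      (cadd (cscale t' (Phi k)) (cscale (-1) (lincombC Phi n u'))) _ Hdist) Htest) as H.
  apply Rabs_le_between in H. lra.
Qed.

End Grid.

End Tests.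

Lemma fine_grid_exists a b : 0 < a -> 0 < b -> exists N, (0 < N)%nat /\ a / INR N <= b.
Proof.
  intros Ha Hb. destruct (archimed_cor1 (b / a)) as [N [HN HN0]]; [now apply Rdiv_lt_0_compat|].
  exists N. split; auto. assert (0 < INR N) by now apply lt_0_INR.
  apply Rmult_lt_compat_l with (r := a) in HN; auto.
  replace (a * (b / a)) with b in HN by (field; lra). unfold Rdiv. lra.
Qed.

Theorem proposition2 (X Y : Top) (f : X -> Y)
  (hX : top_compact X) (hXH : top_hausdorff X) (hY : top_compact Y) (hYH : top_hausdorff Y)
  (hf : top_continuous f) (hopen : open_map f) (hsurj : top_surjective f) :
  OS_open_map f hf.
Proof.
  intros W HW mu0 _ [nu [Hnu [HWnu ->]]].
  destruct (HW nu Hnu HWnu) as [l [Hpos Hl]].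
  set (n := length l). set (Phi i := fst (nth i l (cconst X 0, 1))).
  destruct (list_pos_lower_bound l Hpos) as [eps [Heps Hepsl]].
  destruct (C_family_bounded X Phi n hX) as [M [HM HMb]].
  destruct (fine_grid_exists ((INR n + 1) * M) (eps / 4)) as [N [HN Hfine]];
    [pose proof (pos_INR n); nra | lra|].
  exists (map (fun psi => (psi, eps / 2)) (grid_tests X Y f hX hYH hf hopen hsurj Phi n N)).
  split; [intros p Hp; apply in_map_iff in Hp; destruct Hp as [psi [<- _]]; simpl; lra|].
  intros mu Hmu Htest.
  assert (Hgrid : forall psi, In psi (grid_tests X Y f hX hYH hf hopen hsurj Phi n N) ->
            Rabs (mu psi - nu (Ccomp f hf psi)) < eps / 2).
  { intros psi Hpsi. apply (Htest (psi, eps / 2)), in_map_iff. eauto. }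
  pose proof (lower_tests_pass_of_grid X Y f hX hYH hf hopen hsurj nu mu Phi n eps
    Hnu Hmu M N HMb ltac:(lra) HN Hfine Hgrid) as Hlow.
  pose proof (upper_tests_pass_of_grid X Y f hX hYH hf hopen hsurj nu mu Phi n eps
    Hnu Hmu M N HMb ltac:(lra) HN Hfine Hgrid) as Hup.
  destruct (OS_lift_near X Y f hX hYH hf hopen hsurj nu mu Phi n eps Hnu Hmu Heps Hlow Hup)
    as [nu' [Hnu' [Hnear Hmap]]].
  exists nu'. split; [exact Hnu'|]. split; [|now rewrite Hmap]. apply Hl; auto.
  intros p Hp. destruct (In_nth l p (cconst X 0, 1) Hp) as [i [Hi <-]].
  pose proof (Hnear i Hi). pose proof (Hepsl _ Hp). unfold Phi in *. lra.
Qed.
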